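(* Let $m,d_1,d_2$ be positive integers, $\bm{B}\in\mathbb{C}^{m\times d_1}$, $\bm{A}\in\mathbb{C}^{m\times d_2}$ and $\bm{y}\in\mathbb{C}^m$. For $j=1,\dots,m$ let $\bm{b}_j\in\mathbb{C}^{d_1}$ and $\bm{a}_j\in\mathbb{C}^{d_2}$ be the $j$-th columns of $\bm{B}^{\mathsf H}$ and $\bm{A}^{\mathsf H}$ respectively. Define $F_1:\mathbb{R}^{d_1}\times\mathbb{R}^{d_2}\to\mathbb{R}$ by $$F_1(\bm{h},\bm{x})=\frac14\|\bm{Bh}\|_4^4+\frac14\|\bm{Ax}\|_4^4+\frac12\Big(\|\bm{Bh}\odot\bm{Ax}\|_2^2+\|\bm{y}\odot\bm{Bh}\|_2^2+\|\bm{Ax}\|_2^2+\|\bm{y}\|_2^2\Big),$$ and $H:\mathbb{R}^{d_1}\times\mathbb{R}^{d_2}\to\mathbb{R}$ by $$H(\bm{h},\bm{x})=\frac14\big(\|\bm{h}\|_2^2+\|\bm{x}\|_2^2\big)^2+\frac12\big(\|\bm{h}\|_2^2+\|\bm{x}\|_2^2\big).$$ Then for every real $L$ satisfying $$L\ \ge\ \sum_{j=1}^m\Big(3\|\bm{b}_j\|_2^4+3\|\bm{a}_j\|_2^4+\|\bm{b}_j\|_2^2\|\bm{a}_j\|_2^2+|y_j|^2\|\bm{b}_j\|_2^2+\|\bm{a}_j\|_2^2\Big),$$ the function $LH-F_1$ is convex on $\mathbb{R}^{d_1+d_2}$.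
   Context: $\odot$ denotes the elementwise (Hadamard) product of vectors in $\mathbb{C}^m$; for $\bm{w}\in\mathbb{C}^m$, $\|\bm{w}\|_2^2=\sum_j|w_j|^2$ and $\|\bm{w}\|_4^4=\sum_j|w_j|^4$. $\bm{B}^{\mathsf H}$ is the conjugate transpose, so $(\bm{Bh})_j=\bm{b}_j^{\mathsf H}\bm{h}$ and $(\bm{Ax})_j=\bm{a}_j^{\mathsf H}\bm{x}$. The variables $\bm{h},\bm{x}$ are real vectors, and $(\bm{h},\bm{x})$ is identified with a vector of $\mathbb{R}^{d_1+d_2}$. *)

From HB Require Import structures.
From mathcomp Require Import all_boot all_order all_algebra.
From mathcomp Require Import complex.
Set Implicit Arguments. Unset Strict Implicit. Unset Printing Implicit Defensive.
Import Order.TTheory GRing.Theory Num.Theory.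
Local Open Scope ring_scope.
Local Open Scope complex_scope.

Definition abs2 (R : rcfType) (z : R[i]) : R := (complex.Re z) ^+ 2 + (complex.Im z) ^+ 2.

Definition embed (R : rcfType) n (h : 'cV[R]_n) : 'cV[R[i]]_n :=
  map_mx (fun r => r%:C) h.

Definition cnorm2 (R : rcfType) n (w : 'cV[R[i]]_n) : R :=
  \sum_(j < n) abs2 (w j 0).
Definition cnorm4 (R : rcfType) n (w : 'cV[R[i]]_n) : R :=
  \sum_(j < n) (abs2 (w j 0)) ^+ 2.

Definition hadamard (R : rcfType) n (u v : 'cV[R[i]]_n) : 'cV[R[i]]_n :=
  \col_j (u j 0 * v j 0).

Definition rnorm2 (R : rcfType) n (h : 'cV[R]_n) : R := \sum_(j < n) (h j 0) ^+ 2.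

Definition adjoint (R : rcfType) m n (B : 'M[R[i]]_(m, n)) : 'M[R[i]]_(n, m) :=
  (map_mx (@conjc R) B)^T.

Definition F1 (R : rcfType) m d1 d2 (B : 'M[R[i]]_(m, d1)) (A : 'M[R[i]]_(m, d2))
  (y : 'cV[R[i]]_m) (h : 'cV[R]_d1) (x : 'cV[R]_d2) : R :=
  let Bh := B *m embed h in
  let Ax := A *m embed x in
  4^-1 * cnorm4 Bh + 4^-1 * cnorm4 Ax
  + 2^-1 * (cnorm2 (hadamard Bh Ax) + cnorm2 (hadamard y Bh) + cnorm2 Ax + cnorm2 y).

Definition Hfun (R : rcfType) d1 d2 (h : 'cV[R]_d1) (x : 'cV[R]_d2) : R :=
  4^-1 * (rnorm2 h + rnorm2 x) ^+ 2 + 2^-1 * (rnorm2 h + rnorm2 x).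

(* convexity of G on R^{d1} x R^{d2} = R^{d1+d2} *)
Definition convex_on_pairs (R : rcfType) d1 d2 (G : 'cV[R]_d1 -> 'cV[R]_d2 -> R) :=
  forall (h1 h2 : 'cV[R]_d1) (x1 x2 : 'cV[R]_d2) (t : R), 0 <= t -> t <= 1 ->
    G (t *: h1 + (1 - t) *: h2) (t *: x1 + (1 - t) *: x2)
      <= t * G h1 x1 + (1 - t) * G h2 x2.

From HB Require Import structures.
From mathcomp Require Import all_boot all_order all_algebra.
From mathcomp Require Import complex.
From mathcomp Require Import ring lra.
Set Implicit Arguments. Unset Strict Implicit. Unset Printing Implicit Defensive.
Import Order.TTheory GRing.Theory Num.Theory.
Local Open Scope ring_scope.
Local Open Scope complex_scope.

(* On a line [(h + s dh, x + s dx)] the objective [L H - F1] is a polynomial in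
   the binary quadratic forms [|h + s dh|^2], [|x + s dx|^2],
   [|b_j^H (h + s dh)|^2] and [|a_j^H (x + s dx)|^2]; it splits into one
   quartic in [s] per row [j], weighted by the [j]-th summand of the bound on
   [L], plus a nonnegative multiple of [H].  Each quartic is convex on [0, 1]
   because its second derivative is nonnegative, which an exact two-node
   quadrature turns into an algebraic identity.  Nonnegativity of the second
   derivative only uses that these forms are positive semidefinite, the
   Cauchy-Schwarz bound [|b_j^H v|^2 <= |b_j|^2 |v|^2], and the choice of [L]. *)

Section Convexity.
Variable R : rcfType.

Record form2 := Form2 { f2a : R; f2b : R; f2c : R }.

Definition form2_val (q : form2) (x y : R) : R :=
  f2a q * x ^+ 2 + 2 * f2b q * x * y + f2c q * y ^+ 2.

Definition form2_shift (q : form2) (s : R) : form2 :=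
  Form2 (form2_val q 1 s) (f2b q + f2c q * s) (f2c q).

Definition form2_psd (q : form2) : Prop := forall x y, 0 <= form2_val q x y.

Definition form2_dom (k : R) (p q : form2) : Prop :=
  forall x y, form2_val p x y <= k * form2_val q x y.

Lemma form2_val_shift q s x y :
  form2_val (form2_shift q s) x y = form2_val q x (s * x + y).
Proof. by case: q => a b c; rewrite /form2_shift /form2_val /=; ring. Qed.

Lemma form2_psd_shift q s : form2_psd q -> form2_psd (form2_shift q s).
Proof. by move=> psd_q x y; rewrite form2_val_shift. Qed.

Lemma form2_dom_shift k p q s :
  form2_dom k p q -> form2_dom k (form2_shift p s) (form2_shift q s).
Proof. by move=> dom_pq x y; rewrite !form2_val_shift. Qed.

Lemma form2_psd0 : form2_psd (Form2 0 0 0).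
Proof. by move=> x y; rewrite /form2_val /=; nra. Qed.

Lemma form2_dom0 q : form2_dom 0 (Form2 0 0 0) q.
Proof. by move=> x y; rewrite mul0r /form2_val /=; nra. Qed.

Lemma form2_psd_coef q : form2_psd q ->
  [/\ 0 <= f2a q, 0 <= f2c q & f2b q ^+ 2 <= f2a q * f2c q].
Proof.
case: q => a b c P; rewrite /form2_psd /form2_val /= in P *.
have a0 : 0 <= a by have := P 1 0; lra.
have c0 : 0 <= c by have := P 0 1; lra.
split=> //.
have : 0 <= (a + c) * (a * c - b ^+ 2).
  have -> : (a + c) * (a * c - b ^+ 2)
            = (a * (- b) ^+ 2 + 2 * b * (- b) * a + c * a ^+ 2)
              + (a * c ^+ 2 + 2 * b * c * (- b) + c * (- b) ^+ 2) by ring.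
  exact: addr_ge0.
have [ac0|ac0 _] := ltrP 0 (a + c); first by rewrite pmulr_rge0 // subr_ge0.
have := P 1 (- b); nra.
Qed.

Lemma form2_dom_coef k p q : form2_dom k p q ->
  f2a p <= k * f2a q /\ f2c p <= k * f2c q.
Proof.
case: p q => [ap bp cp] [aq bq cq] P; rewrite /form2_dom /form2_val /= in P *.
by split; [have := P 1 0 | have := P 0 1]; nra.
Qed.

Lemma cross_term_le (aU cU aV cV bU bV : R) :
  0 <= aU -> 0 <= cU -> 0 <= aV -> 0 <= cV ->
  bU ^+ 2 <= aU * cU -> bV ^+ 2 <= aV * cV ->
  2 * bU * bV <= cU * aV + aU * cV.
Proof.
move=> aU0 cU0 aV0 cV0 hU hV.
have rhs0 : 0 <= cU * aV + aU * cV by rewrite addr_ge0 // mulr_ge0.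
have sq : (2 * bU * bV) ^+ 2 <= (cU * aV + aU * cV) ^+ 2.
  have := ler_pM (sqr_ge0 bU) (sqr_ge0 bV) hU hV.
  have := sqr_ge0 (cU * aV - aU * cV); nra.
apply: le_trans (ler_norm _) _.
by rewrite -ler_sqr ?nnegrE ?normr_ge0 // real_normK ?num_real.
Qed.

Lemma mixed_product_le (al be aH aX cH cX : R) :
  0 <= al -> 0 <= be -> 0 <= aH -> 0 <= aX -> 0 <= cH -> 0 <= cX ->
  3 * ((be * aH + al * aX) * (be * cH + al * cX))
  <= (3 * be ^+ 2 + 3 * al ^+ 2 + be * al) * ((aH + aX) * (cH + cX)).
Proof.
move=> al0 be0 aH0 aX0 cH0 cX0; rewrite -subr_ge0.
have -> : (3 * be ^+ 2 + 3 * al ^+ 2 + be * al) * ((aH + aX) * (cH + cX))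
          - 3 * ((be * aH + al * aX) * (be * cH + al * cX))
        = (3 * al ^+ 2 + be * al) * (aH * cH) + (3 * be ^+ 2 + be * al) * (aX * cX)
          + (3 * (al - be) ^+ 2 + 4 * (al * be)) * (aH * cX + aX * cH) by ring.
by do ![apply: ler0n | apply: sqr_ge0 | assumption | apply: addr_ge0 | apply: mulr_ge0].
Qed.

Definition convex01 (g : R -> R) : Prop :=
  forall t, 0 <= t -> t <= 1 -> g t <= t * g 1 + (1 - t) * g 0.

Lemma convex01D (f g : R -> R) :
  convex01 f -> convex01 g -> convex01 (fun s => f s + g s).
Proof.
move=> cf cg t t0 t1.
by rewrite !mulrDr addrACA lerD ?cf ?cg.
Qed.

Lemma convex01_sum n (g : 'I_n -> R -> R) :
  (forall j, convex01 (g j)) -> convex01 (fun s => \sum_j g j s).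
Proof.
move=> cg t t0 t1; rewrite !mulr_sumr -big_split /=.
by apply: ler_sum => j _; apply: cg.
Qed.

Lemma convex01_eq (f g : R -> R) : f =1 g -> convex01 g -> convex01 f.
Proof. by move=> fg cg t t0 t1; rewrite !fg; apply: cg. Qed.

(* One row of [L H - F1] along a line, [K] being the row's share of [L]; the
   forms [H], [X], [U], [V] stand for [|h + s dh|^2], [|x + s dx|^2],
   [|b_j^H (h + s dh)|^2] and [|a_j^H (x + s dx)|^2]. *)
Definition row_term (K y2 : R) (H X U V : form2) (s : R) : R :=
  let rho := form2_val H 1 s + form2_val X 1 s in
  let u := form2_val U 1 s in
  let v := form2_val V 1 s in
  K * (4^-1 * rho ^+ 2 + 2^-1 * rho)
  - (4^-1 * u ^+ 2 + 4^-1 * v ^+ 2 + 2^-1 * (u * v + y2 * u + v + y2)).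

(* Half the second derivative of [row_term K y2 H X U V] at [0]. *)
Definition row_hess0 (K y2 : R) (H X U V : form2) : R :=
  K * ((f2b H + f2b X) ^+ 2 + (f2a H + f2a X) * (f2c H + f2c X) / 2
       + (f2c H + f2c X) / 2)
  - (f2b U ^+ 2 + f2a U * f2c U / 2 + f2b V ^+ 2 + f2a V * f2c V / 2
     + (f2c U * f2a V + f2a U * f2c V) / 2 + 2 * f2b U * f2b V
     + y2 * f2c U / 2 + f2c V / 2).

Definition row_hess K y2 H X U V (s : R) : R :=
  row_hess0 K y2 (form2_shift H s) (form2_shift X s)
    (form2_shift U s) (form2_shift V s).

Definition quad_node (t : R) : R := (1 + t + t ^+ 2) / (2 * (1 + t)).
Definition quad_weight (t : R) : R := 2 * (1 + t) ^+ 2 / (3 * (1 + t + t ^+ 2)).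

Lemma quad_weight_ge0 t : 0 <= t -> 0 <= quad_weight t.
Proof. by move=> t0; rewrite divr_ge0 //; nra. Qed.

Lemma quad_weight_le1 t : 0 <= t -> quad_weight t <= 1.
Proof. by move=> t0; rewrite ler_pdivrMr; nra. Qed.

(* [t g(1) + (1-t) g(0) - g(t)] is the integral of [g''] against a Green
   kernel of total mass [t(1-t)/2]; since [row_term] is quartic, [row_hess]
   is quadratic and the quadrature with nodes [0] and [quad_node t] is exact. *)
Lemma row_term_secant K y2 H X U V t : 0 <= t ->
  t * row_term K y2 H X U V 1 + (1 - t) * row_term K y2 H X U V 0
    - row_term K y2 H X U V t
  = t * (1 - t) * ((1 - quad_weight t) * row_hess K y2 H X U V 0
                   + quad_weight t * row_hess K y2 H X U V (quad_node t)).
Proof.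
move=> t0; rewrite /quad_node /quad_weight /row_hess /row_hess0 /row_term.
case: H X U V => [aH bH cH] [aX bX cX] [aU bU cU] [aV bV cV].
rewrite /form2_shift /form2_val /=.
have t1 : 1 + t != 0 by rewrite lt0r_neq0 //; lra.
have t2 : 1 + t + t ^+ 2 != 0 by rewrite lt0r_neq0 //; nra.
by field; rewrite t1 t2.
Qed.

Section RowConvexity.
Variables (K y2 al be : R).
Hypotheses (al0 : 0 <= al) (be0 : 0 <= be) (y20 : 0 <= y2).
Hypothesis K_ge : 3 * be ^+ 2 + 3 * al ^+ 2 + be * al + y2 * be + al <= K.

Lemma row_hess0_ge0 (H X U V : form2) :
  form2_psd H -> form2_psd X -> form2_psd U -> form2_psd V ->
  form2_dom be U H -> form2_dom al V X -> 0 <= row_hess0 K y2 H X U V.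
Proof.
move: H X U V => [aH bH cH] [aX bX cX] [aU bU cU] [aV bV cV] pH pX pU pV dUH dVX.
have [/= aH0 cH0 _] := form2_psd_coef pH.
have [/= aX0 cX0 _] := form2_psd_coef pX.
have [/= aU0 cU0 dU] := form2_psd_coef pU.
have [/= aV0 cV0 dV] := form2_psd_coef pV.
have [/= aUH cUH] := form2_dom_coef dUH.
have [/= aVX cVX] := form2_dom_coef dVX.
rewrite /row_hess0 /=.
have cross := cross_term_le aU0 cU0 aV0 cV0 dU dV.
have quart := mixed_product_le al0 be0 aH0 aX0 cH0 cX0.
set P := (aH + aX) * (cH + cX) in quart *; set C := cH + cX.
have P0 : 0 <= P by rewrite mulr_ge0 // addr_ge0.
have UV : (aU + aV) * (cU + cV) <= (be * aH + al * aX) * (be * cH + al * cX).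
  by apply: ler_pM; rewrite ?addr_ge0 // lerD.
have lin : y2 * cU + cV <= (y2 * be + al) * C.
  apply: (@le_trans _ _ (y2 * (be * cH) + al * cX)).
    by apply: lerD => //; apply: ler_wpM2l.
  rewrite -subr_ge0.
  have -> : (y2 * be + al) * C - (y2 * (be * cH) + al * cX) = y2 * be * cX + al * cH.
    by rewrite /C; ring.
  by rewrite addr_ge0 ?mulr_ge0.
have KMN : 3 * be ^+ 2 + 3 * al ^+ 2 + be * al + (y2 * be + al) <= K by rewrite addrA.
set M := 3 * be ^+ 2 + 3 * al ^+ 2 + be * al in KMN quart *.
set N := y2 * be + al in KMN lin *.
have M0 : 0 <= M.
  by do ![apply: ler0n | apply: sqr_ge0 | assumption | apply: addr_ge0 | apply: mulr_ge0].
have C0 : 0 <= C by rewrite addr_ge0.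
have N0 : 0 <= N by rewrite addr_ge0 ?mulr_ge0.
have K_PC : M * P + N * C <= K * (P + C).
  have : (M + N) * (P + C) <= K * (P + C) by rewrite ler_wpM2r ?addr_ge0 //; lra.
  have := mulr_ge0 N0 P0; have := mulr_ge0 M0 C0; nra.
(* The subtracted part is at most [(3 (aU + aV) (cU + cV) + y2 cU + cV) / 2]. *)
have := mulr_ge0 (le_trans (addr_ge0 M0 N0) KMN) (sqr_ge0 (bH + bX)).
have : (aU + aV) * (cU + cV) = aU * cU + aV * cV + (cU * aV + aU * cV) by ring.
lra.
Qed.

Lemma row_term_convex (H X U V : form2) :
  form2_psd H -> form2_psd X -> form2_psd U -> form2_psd V ->
  form2_dom be U H -> form2_dom al V X -> convex01 (row_term K y2 H X U V).
Proof.
move=> pH pX pU pV dUH dVX t t0 t1.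
have hess_ge0 s : 0 <= row_hess K y2 H X U V s.
  by apply: row_hess0_ge0; first [exact: form2_psd_shift | exact: form2_dom_shift].
rewrite -subr_ge0 row_term_secant // mulr_ge0 ?mulr_ge0 ?subr_ge0 //.
have w0 := quad_weight_ge0 t0; have w1 := quad_weight_le1 t0.
by rewrite addr_ge0 // mulr_ge0 // subr_ge0.
Qed.

End RowConvexity.

Definition rdot n (h g : 'cV[R]_n) : R := \sum_k h k 0 * g k 0.

Definition gram2 n (h g : 'cV[R]_n) : form2 := Form2 (rnorm2 h) (rdot h g) (rnorm2 g).

Lemma rnorm2_comb n (h g : 'cV[R]_n) x y :
  rnorm2 (x *: h + y *: g) = form2_val (gram2 h g) x y.
Proof.
rewrite /form2_val /= /rnorm2 /rdot !mulr_sumr !mulr_suml -!big_split /=.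
by apply: eq_bigr => k _; rewrite !mxE; ring.
Qed.

Lemma rnorm2_line n (h g : 'cV[R]_n) s :
  rnorm2 (h + s *: g) = form2_val (gram2 h g) 1 s.
Proof. by rewrite -rnorm2_comb scale1r. Qed.

Lemma rnorm2_ge0 n (h : 'cV[R]_n) : 0 <= rnorm2 h.
Proof. by apply: sumr_ge0 => k _; apply: sqr_ge0. Qed.

Lemma gram2_psd n (h g : 'cV[R]_n) : form2_psd (gram2 h g).
Proof. by move=> x y; rewrite -rnorm2_comb rnorm2_ge0. Qed.

Lemma rdot_Cauchy_Schwarz n (h g : 'cV[R]_n) : rdot h g ^+ 2 <= rnorm2 h * rnorm2 g.
Proof. by case: (form2_psd_coef (gram2_psd h g)). Qed.

Definition dotC (u v : R[i]) : R := complex.Re u * complex.Re v + complex.Im u * complex.Im v.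

Definition gramC (u v : R[i]) : form2 := Form2 (abs2 u) (dotC u v) (abs2 v).

Lemma abs2_comb (u v : R[i]) x y :
  abs2 (x%:C * u + y%:C * v) = form2_val (gramC u v) x y.
Proof. by case: u v => a b [c d]; rewrite /form2_val /= /abs2 /dotC /=; ring. Qed.

Lemma abs2_line (u v : R[i]) s : abs2 (u + s%:C * v) = form2_val (gramC u v) 1 s.
Proof. by rewrite -abs2_comb rmorph1 mul1r. Qed.

Lemma abs2_ge0 (u : R[i]) : 0 <= abs2 u.
Proof. by rewrite addr_ge0 ?sqr_ge0. Qed.

Lemma abs2M (u v : R[i]) : abs2 (u * v) = abs2 u * abs2 v.
Proof. by case: u v => a b [c d]; rewrite /abs2 /=; ring. Qed.

Lemma abs2_conj (u : R[i]) : abs2 u^* = abs2 u.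
Proof. by case: u => a b; rewrite /abs2 /=; ring. Qed.

Lemma gramC_psd (u v : R[i]) : form2_psd (gramC u v).
Proof. by move=> x y; rewrite -abs2_comb abs2_ge0. Qed.

Lemma cnorm2_ge0 n (w : 'cV[R[i]]_n) : 0 <= cnorm2 w.
Proof. by apply: sumr_ge0 => k _; apply: abs2_ge0. Qed.

Lemma cnorm2_hadamard k (u v : 'cV[R[i]]_k) :
  cnorm2 (hadamard u v) = \sum_j abs2 (u j 0) * abs2 (v j 0).
Proof. by apply: eq_bigr => j _; rewrite mxE abs2M. Qed.

Section RowOfMatrix.
Variables (m n : nat) (B : 'M[R[i]]_(m, n)) (j : 'I_m).

Lemma mulmx_embed_comb (h g : 'cV[R]_n) x y :
  (B *m embed (x *: h + y *: g)) j 0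
  = x%:C * (B *m embed h) j 0 + y%:C * (B *m embed g) j 0.
Proof.
have -> : embed (x *: h + y *: g) = x%:C *: embed h + y%:C *: embed g.
  by apply/matrixP => k l; rewrite !mxE rmorphD !rmorphM.
by rewrite mulmxDr -!scalemxAr !mxE.
Qed.

Lemma mulmx_embed_line (h g : 'cV[R]_n) s :
  (B *m embed (h + s *: g)) j 0 = (B *m embed h) j 0 + s%:C * (B *m embed g) j 0.
Proof. by rewrite -[h in LHS]scale1r mulmx_embed_comb rmorph1 mul1r. Qed.

Lemma abs2_mulmx_embed_le (g : 'cV[R]_n) :
  abs2 ((B *m embed g) j 0) <= cnorm2 (col j (adjoint B)) * rnorm2 g.
Proof.
set re := \col_k complex.Re (B j k); set im := \col_k complex.Im (B j k).
have entry : (B *m embed g) j 0 = \sum_k B j k * (g k 0)%:C.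
  by rewrite mxE; apply: eq_bigr => k _; rewrite mxE.
have eRe : complex.Re ((B *m embed g) j 0) = rdot re g.
  rewrite entry (raddf_sum (@complex.Re R : Rcomplex R -> R)).
  by apply: eq_bigr => k _; rewrite !mxE; case: (B j k) => a b /=; ring.
have eIm : complex.Im ((B *m embed g) j 0) = rdot im g.
  rewrite entry (raddf_sum (@complex.Im R : Rcomplex R -> R)).
  by apply: eq_bigr => k _; rewrite !mxE; case: (B j k) => a b /=; ring.
have eB : cnorm2 (col j (adjoint B)) = rnorm2 re + rnorm2 im.
  by rewrite /cnorm2 -big_split; apply: eq_bigr => k _; rewrite !mxE abs2_conj.
rewrite {1}/abs2 eRe eIm eB mulrDl.
by apply: lerD; apply: rdot_Cauchy_Schwarz.
Qed.

Lemma gramC_mulmx_dom (h g : 'cV[R]_n) :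
  form2_dom (cnorm2 (col j (adjoint B)))
    (gramC ((B *m embed h) j 0) ((B *m embed g) j 0)) (gram2 h g).
Proof.
by move=> x y; rewrite -abs2_comb -mulmx_embed_comb -rnorm2_comb abs2_mulmx_embed_le.
Qed.

End RowOfMatrix.

Lemma convex_on_pairs_lines d1 d2 (G : 'cV[R]_d1 -> 'cV[R]_d2 -> R) :
  (forall h dh x dx, convex01 (fun s => G (h + s *: dh) (x + s *: dx))) ->
  convex_on_pairs G.
Proof.
move=> cG h1 h2 x1 x2 t t0 t1.
have seg k (u v : 'cV[R]_k) : t *: u + (1 - t) *: v = v + t *: (u - v).
  by apply/matrixP => i l; rewrite !mxE; ring.
have := cG h2 (h1 - h2) x2 (x1 - x2) t t0 t1.
by rewrite !seg !scale1r !scale0r !addr0 ![_ + (_ - _)]addrC !subrK.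
Qed.

Section Objective.
Variables (m d1 d2 : nat) (B : 'M[R[i]]_(m, d1)) (A : 'M[R[i]]_(m, d2)).
Variable y : 'cV[R[i]]_m.

Definition row_weight (j : 'I_m) : R :=
  3 * cnorm2 (col j (adjoint B)) ^+ 2 + 3 * cnorm2 (col j (adjoint A)) ^+ 2
  + cnorm2 (col j (adjoint B)) * cnorm2 (col j (adjoint A))
  + abs2 (y j 0) * cnorm2 (col j (adjoint B))
  + cnorm2 (col j (adjoint A)).

Lemma F1_sum_rows h x : F1 B A y h x =
  \sum_j (4^-1 * abs2 ((B *m embed h) j 0) ^+ 2 + 4^-1 * abs2 ((A *m embed x) j 0) ^+ 2
    + 2^-1 * (abs2 ((B *m embed h) j 0) * abs2 ((A *m embed x) j 0)
              + abs2 (y j 0) * abs2 ((B *m embed h) j 0)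
              + abs2 ((A *m embed x) j 0) + abs2 (y j 0))).
Proof.
rewrite /F1 !cnorm2_hadamard /cnorm4 /cnorm2.
by rewrite !big_split /= -!mulr_sumr !big_split.
Qed.

Lemma objective_line L h dh x dx s :
  L * Hfun (h + s *: dh) (x + s *: dx) - F1 B A y (h + s *: dh) (x + s *: dx) =
  \sum_j row_term (row_weight j) (abs2 (y j 0)) (gram2 h dh) (gram2 x dx)
      (gramC ((B *m embed h) j 0) ((B *m embed dh) j 0))
      (gramC ((A *m embed x) j 0) ((A *m embed dx) j 0)) s
  + row_term (L - \sum_j row_weight j) 0 (gram2 h dh) (gram2 x dx)
      (Form2 0 0 0) (Form2 0 0 0) s.
Proof.
rewrite F1_sum_rows /Hfun !rnorm2_line.
under eq_bigr do rewrite !mulmx_embed_line !abs2_line.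
rewrite /row_term /form2_val /= sumrB -mulr_suml.
set S := \sum_(j < m) _; set T := \sum_(j < m) _.
ring.
Qed.

End Objective.
End Convexity.

Theorem theorem1 (R : rcfType) (m d1 d2 : nat)
  (hm : (0 < m)%N) (hd1 : (0 < d1)%N) (hd2 : (0 < d2)%N)
  (B : 'M[R[i]]_(m, d1)) (A : 'M[R[i]]_(m, d2)) (y : 'cV[R[i]]_m) (L : R) :
  \sum_(j < m)
     (3 * (cnorm2 (col j (adjoint B))) ^+ 2 + 3 * (cnorm2 (col j (adjoint A))) ^+ 2
      + cnorm2 (col j (adjoint B)) * cnorm2 (col j (adjoint A))
      + abs2 (y j 0) * cnorm2 (col j (adjoint B))
      + cnorm2 (col j (adjoint A))) <= L ->
  convex_on_pairs (fun (h : 'cV[R]_d1) (x : 'cV[R]_d2) => L * Hfun h x - F1 B A y h x).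
Proof.
move=> L_ge; apply: convex_on_pairs_lines => h dh x dx.
apply: convex01_eq (objective_line B A y L h dh x dx) _.
apply: convex01D.
  apply: convex01_sum => j.
  apply: (row_term_convex (al := cnorm2 (col j (adjoint A)))
                          (be := cnorm2 (col j (adjoint B)))) => //;
    by [exact: cnorm2_ge0 | exact: abs2_ge0 | exact: gram2_psd | exact: gramC_psd
       | exact: gramC_mulmx_dom].
apply: (row_term_convex (al := 0) (be := 0)) => //;
  first [exact: gram2_psd | exact: form2_psd0 | exact: form2_dom0 | idtac].
by rewrite expr0n /= !(mulr0, mul0r, addr0) subr_ge0.
Qed.
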